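(* Let $(X,T)$ be a minimal topological dynamical system with $T$ a homeomorphism, and suppose $\delta>0$ is such that $(X,T)$ is block $\mathcal{F}_{ip}$-sensitive with sensitive constant $10\delta$. Let $x\in X$ and let $U$ be any neighborhood of $x$. Then there are $z\in U$ and $y\in X$ such that $(y,z)\in\mathbf{RP}^{[\infty]}(X)$ and $d(z,y)\ge\delta$.
   Context: A topological dynamical system: compact metric space $(X,d)$ with continuous surjection $T$; minimal means every orbit is dense. A finite IP-set of length $n$ is $FS((p_i)_{i=1}^n)=\{\sum_{i\in\alpha}p_i:\emptyset\ne\alpha\subset\{1,\dots,n\}\}$ with $p_i\in\mathbb{N}$. $(X,T)$ is block $\mathcal{F}_{ip}$-sensitive with sensitive constant $c>0$ if for each $x\in X$, each neighborhood $U$ of $x$ and each $l\in\mathbb{N}$ there is $y_l\in U$ such that $\{n\in\mathbb{Z}_+:d(T^nx,T^ny_l)>c\}$ contains a finite IP-set of length $l$. For $d\in\mathbb{N}$, $(x,y)\in\mathbf{RP}^{[d]}(X)$ if for every $\eta>0$ there are $x',y'$ and $\mathbf{n}\in\mathbb{Z}^d$ with $d(x,x')<\eta$, $d(y,y')<\eta$, $d(T^{\mathbf{n}\cdot\varepsilon}x',T^{\mathbf{n}\cdot\varepsilon}y')<\eta$ for all $\varepsilon\in\{0,1\}^d\setminus\{0\}$; $\mathbf{RP}^{[\infty]}=\bigcap_d\mathbf{RP}^{[d]}$. *)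

From Stdlib Require Import Reals ZArith.
Open Scope R_scope.

Section Defs.
Context {X : Type} (d : X -> X -> R).

Definition is_metric : Prop :=
  (forall x y, 0 <= d x y) /\
  (forall x y, d x y = 0 <-> x = y) /\
  (forall x y, d x y = d y x) /\
  (forall x y z, d x z <= d x y + d y z).

Definition open_set (U : X -> Prop) : Prop :=
  forall x, U x -> exists r, r > 0 /\ forall y, d x y < r -> U y.

Definition nbhd (x : X) (U : X -> Prop) : Prop :=
  exists V, open_set V /\ V x /\ forall y, V y -> U y.

Definition compact_space : Prop :=
  forall (I : Type) (F : I -> X -> Prop),
    (forall i, open_set (F i)) -> (forall x, exists i, F i x) ->
    exists l : list I, forall x, exists i, List.In i l /\ F i x.

Definition continuous_map (f : X -> X) : Prop :=
  forall x eps, eps > 0 -> exists del, del > 0 /\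
    forall y, d x y < del -> d (f x) (f y) < eps.

Definition minimal (T : X -> X) : Prop :=
  forall x y eps, eps > 0 -> exists n : nat, d (Nat.iter n T x) y < eps.

Definition zpow (T Tinv : X -> X) (k : Z) (x : X) : X :=
  match k with
  | Z0 => x
  | Zpos p => Nat.iter (Pos.to_nat p) T x
  | Zneg p => Nat.iter (Pos.to_nat p) Tinv x
  end.

Fixpoint sum_below {A : Type} (add : A -> A -> A) (zero : A)
    (f : nat -> A) (n : nat) : A :=
  match n with
  | O => zero
  | S m => add (sum_below add zero f m) (f m)
  end.

(* S contains a finite IP-set FS((p_i)_{i=1}^l) of length l, p_i in N = {1,2,...} *)
Definition contains_finite_IP (S : nat -> Prop) (l : nat) : Prop :=
  exists p : nat -> nat, (forall i, (i < l)%nat -> (1 <= p i)%nat) /\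
    forall alpha : nat -> bool, (exists i, (i < l)%nat /\ alpha i = true) ->
      S (sum_below Nat.add 0%nat (fun i => if alpha i then p i else 0%nat) l).

Definition block_Fip_sensitive (T : X -> X) (c : R) : Prop :=
  forall x U, nbhd x U -> forall l : nat, exists y, U y /\
    contains_finite_IP (fun n => d (Nat.iter n T x) (Nat.iter n T y) > c) l.

Definition dot_eps (D : nat) (n : nat -> Z) (eps : nat -> bool) : Z :=
  sum_below Z.add 0%Z (fun i => if eps i then n i else 0%Z) D.

Definition RP (T Tinv : X -> X) (D : nat) (x y : X) : Prop :=
  forall eta, eta > 0 -> exists x' y' (n : nat -> Z),
    d x x' < eta /\ d y y' < eta /\
    forall eps : nat -> bool, (exists i, (i < D)%nat /\ eps i = true) ->
      d (zpow T Tinv (dot_eps D n eps) x') (zpow T Tinv (dot_eps D n eps) y') < eta.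

Definition RP_inf (T Tinv : X -> X) (x y : X) : Prop :=
  forall D : nat, (1 <= D)%nat -> RP T Tinv D x y.

End Defs.

(* Cover X by finitely many sets of diameter < eta.  Block sensitivity gives a point y
   eta-close to x and a long finite IP-set of times n at which T^n x and T^n y are more
   than 10 delta apart; colouring each n by the cells of T^n x and T^n y, a finite
   Folkman theorem yields a monochromatic IP-set FS(q_1, ..., q_D, q).  Then T^q w and w
   (w = x, y) remain eta-close along FS(q_1, ..., q_D), while T^q x and T^q y are
   10 delta apart, so one of them, c, is 5 delta away from x and (c, x) satisfies the
   defining condition of RP^[D] up to eta.  A cluster point of such c, as D grows and
   eta shrinks, is the required y, with z = x. *)

From Pilot Require Import Defs.
From Stdlib Require Import Reals ZArith Lia Lra List.
From Stdlib Require Import Classical ClassicalEpsilon FunctionalExtensionality.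
Open Scope R_scope.

Lemma sum_below_ext {A} (add : A -> A -> A) (zero : A) (f g : nat -> A) n :
  (forall i, (i < n)%nat -> f i = g i) ->
  sum_below add zero f n = sum_below add zero g n.
Proof.
  induction n as [|n IH]; intros Hfg; [reflexivity|]; simpl.
  rewrite IH by (intros i Hi; apply Hfg; lia).
  now rewrite Hfg by lia.
Qed.

Lemma sum_below_morph {A B} (addA : A -> A -> A) (zeroA : A) (addB : B -> B -> B) (zeroB : B)
    (h : A -> B) (f : nat -> A) n :
  h zeroA = zeroB -> (forall a b, h (addA a b) = addB (h a) (h b)) ->
  h (sum_below addA zeroA f n) = sum_below addB zeroB (fun i => h (f i)) n.
Proof. intros H0 Hadd. induction n as [|n IH]; simpl; [exact H0|]. now rewrite Hadd, IH. Qed.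

Lemma sum_below_extend {A} (add : A -> A -> A) (zero : A) (f : nat -> A) n n' :
  (forall a, add a zero = a) -> (n <= n')%nat ->
  (forall i, (n <= i < n')%nat -> f i = zero) ->
  sum_below add zero f n' = sum_below add zero f n.
Proof.
  intros Hzero Hle. induction Hle as [|n' Hle IH]; intros Hf; [reflexivity|]; simpl.
  rewrite Hf, Hzero by lia. apply IH. intros i Hi. apply Hf. lia.
Qed.

Section FiniteIPSets.
Local Open Scope nat_scope.
Local Open Scope bool_scope.
Local Notation sumn := (sum_below Nat.add 0).

Lemma sumn_split f m n : sumn f (m + n) = sumn f m + sumn (fun i => f (m + i)) n.
Proof.
  induction n as [|n IH]; [simpl; now rewrite Nat.add_0_r, Nat.add_0_r|].
  rewrite Nat.add_succ_r. simpl. rewrite IH. lia.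
Qed.

Lemma sumn_zero f n : (forall i, i < n -> f i = 0) -> sumn f n = 0.
Proof.
  intros Hf. rewrite (sum_below_extend _ _ _ 0 n); [reflexivity|lia|lia|].
  intros i Hi. apply Hf. lia.
Qed.

Lemma sumn_ge_term f n i : i < n -> f i <= sumn f n.
Proof.
  induction n as [|n IH]; intros Hi; simpl; [lia|].
  destruct (Nat.eq_dec i n) as [->|Hne]; [lia|]. specialize (IH ltac:(lia)). lia.
Qed.

Lemma sumn_decrement v n k : k < n -> 1 <= v k ->
  sumn (fun i => if i =? k then v i - 1 else v i) n + 1 = sumn v n.
Proof.
  induction n as [|n IH]; intros Hk Hv; [lia|]; simpl.
  destruct (Nat.eqb_spec n k) as [->|Hne].
  - rewrite (sum_below_ext _ _ _ v); [lia|].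
    intros i Hi. destruct (Nat.eqb_spec i k); [lia|reflexivity].
  - rewrite <- IH by lia. lia.
Qed.

Definition ip_sum (p : nat -> nat) (alpha : nat -> bool) (l : nat) : nat :=
  sumn (fun i => if alpha i then p i else 0) l.

Lemma ip_sum_last p al l : ip_sum p al (S l) = ip_sum p al l + (if al l then p l else 0).
Proof. reflexivity. Qed.

Lemma ip_sum_ext p al al' l : (forall i, i < l -> al i = al' i) -> ip_sum p al l = ip_sum p al' l.
Proof. intros H. apply sum_below_ext. intros i Hi. now rewrite H. Qed.

Lemma ip_sum_empty p al l : (forall i, i < l -> al i = false) -> ip_sum p al l = 0.
Proof. intros H. apply sumn_zero. intros i Hi. now rewrite H. Qed.

Lemma ip_sum_cat p al bl N M :
  ip_sum p (fun i => if i <? N then al i else bl (i - N)) (N + M)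
  = ip_sum p al N + ip_sum (fun i => p (N + i)) bl M.
Proof.
  unfold ip_sum. rewrite sumn_split. f_equal; apply sum_below_ext; intros i Hi.
  - now replace (i <? N) with true by (symmetry; apply Nat.ltb_lt; lia).
  - replace (N + i <? N) with false by (symmetry; apply Nat.ltb_ge; lia).
    now replace (N + i - N) with i by lia.
Qed.

Lemma ip_sum_interval q a b M : a <= b <= M ->
  ip_sum q (fun i => (a <=? i) && (i <? b)) M = sumn (fun i => q (a + i)) (b - a).
Proof.
  intros Hab. replace M with (a + ((b - a) + (M - b))) by lia.
  unfold ip_sum. rewrite !sumn_split, (sumn_zero _ a), (sumn_zero _ (M - b)).
  - simpl. rewrite Nat.add_0_r. apply sum_below_ext. intros i Hi.
    destruct (Nat.leb_spec a (a + i)), (Nat.ltb_spec (a + i) b); simpl; lia.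
  - intros i Hi. destruct (Nat.leb_spec a (a + (b - a + i))), (Nat.ltb_spec (a + (b - a + i)) b);
      simpl; [lia|reflexivity..].
  - intros i Hi. destruct (Nat.leb_spec a i); [lia|reflexivity].
Qed.


Lemma contains_finite_IP_mono (P Q : nat -> Prop) l :
  (forall n, P n -> Q n) -> contains_finite_IP P l -> contains_finite_IP Q l.
Proof. intros HPQ [p [Hp HP]]. exists p. split; auto. Qed.

Lemma contains_finite_IP_0 (P : nat -> Prop) : contains_finite_IP P 0.
Proof. exists (fun _ => 1). split; [lia|]. intros al [i [Hi _]]. lia. Qed.

Lemma contains_finite_IP_snoc (P : nat -> Prop) g m :
  1 <= g -> P g -> contains_finite_IP (fun n => P n /\ P (g + n)) m ->
  contains_finite_IP P (S m).
Proof.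
  intros Hg HPg [q [Hq HPq]].
  exists (fun i => if i =? m then g else q i). split.
  - intros i Hi. destruct (Nat.eqb_spec i m); [lia|apply Hq; lia].
  - intros al Hal. simpl. rewrite Nat.eqb_refl.
    rewrite (sum_below_ext _ _ _ (fun i => if al i then q i else 0))
      by (intros i Hi; destruct (Nat.eqb_spec i m); [lia|reflexivity]).
    fold (ip_sum q al m).
    destruct (classic (exists i, i < m /\ al i = true)) as [Hne|Hemp].
    + destruct (HPq al Hne) as [H1 H2].
      destruct (al m); [rewrite Nat.add_comm|rewrite Nat.add_0_r]; assumption.
    + assert (Hi : forall i, i < m -> al i = false).
      { intros i Hi. apply Bool.not_true_is_false. intros Hai. apply Hemp. eauto. }
      rewrite ip_sum_empty by exact Hi.
      destruct Hal as [i [Hi' Hai]]. destruct (Nat.eq_dec i m) as [<-|Hne].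
      * now rewrite Hai.
      * rewrite Hi in Hai by lia. discriminate.
Qed.

Lemma nat_pigeonhole B (f : nat -> nat) :
  (forall j, j <= B -> f j < B) -> exists j j', j < j' <= B /\ f j = f j'.
Proof.
  revert f. induction B as [|B IH]; intros f Hf.
  - specialize (Hf 0 (le_n 0)). lia.
  - destruct (classic (exists j, j <= B /\ f j = f (S B))) as [[j [Hj E]]|Hnone].
    + exists j, (S B). repeat split; auto; lia.
    + (* merge the value B into the value f (S B), which no earlier index takes *)
      destruct (IH (fun j => if f j =? B then f (S B) else f j)) as [j [j' [Hjj' E]]].
      { intros j Hj. destruct (Nat.eqb_spec (f j) B) as [EB|NB].
        - assert (f (S B) <> B) by (intros E; apply Hnone; exists j; split; [lia|congruence]).
          specialize (Hf (S B) (le_n _)). lia.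
        - specialize (Hf j ltac:(lia)). lia. }
      exists j, j'. split; [lia|].
      destruct (Nat.eqb_spec (f j) B), (Nat.eqb_spec (f j') B); try congruence;
        exfalso; apply Hnone; [exists j'|exists j]; split; [lia|congruence|lia|congruence].
Qed.

Definition update_at (al : nat -> bool) (N : nat) (b : bool) : nat -> bool :=
  fun i => if i =? N then b else al i.

(* The base-[K] digits of [pattern_code K N F] are the values of [F] on the
   [2 ^ N] selections of indices below [N]. *)
Fixpoint pattern_code (K N : nat) (F : (nat -> bool) -> nat) : nat :=
  match N with
  | 0 => F (fun _ => false)
  | S N' => pattern_code K N' (fun al => F (update_at al N' false))
            + K ^ 2 ^ N' * pattern_code K N' (fun al => F (update_at al N' true))
  end.

Lemma pattern_code_lt K N F : (forall al, F al < K) -> pattern_code K N F < K ^ 2 ^ N.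
Proof.
  revert F. induction N as [|N IH]; intros F HF; simpl.
  - rewrite Nat.mul_1_r. apply HF.
  - pose proof (IH (fun al => F (update_at al N false)) ltac:(intros; apply HF)).
    pose proof (IH (fun al => F (update_at al N true)) ltac:(intros; apply HF)).
    rewrite Nat.add_0_r, Nat.pow_add_r. nia.
Qed.

Lemma pattern_code_inj K N F G : (forall al, F al < K) -> (forall al, G al < K) ->
  pattern_code K N F = pattern_code K N G ->
  forall al, (forall i, N <= i -> al i = false) -> F al = G al.
Proof.
  revert F G. induction N as [|N IH]; intros F G HF HG E al Hal; simpl in E.
  - replace al with (fun _ : nat => false) by (extensionality i; symmetry; apply Hal; lia).
    exact E.
  - pose proof (pattern_code_lt K N (fun al => F (update_at al N false)) ltac:(intros; apply HF)).
    pose proof (pattern_code_lt K N (fun al => G (update_at al N false)) ltac:(intros; apply HG)).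
    rewrite !(Nat.add_comm (pattern_code K N (fun al => _ (update_at al N false)))) in E.
    apply Nat.div_mod_unique in E; [|assumption..]. destruct E as [Etrue Efalse].
    set (al0 := update_at al N false).
    assert (Hal0 : forall i, N <= i -> al0 i = false).
    { intros i Hi. unfold al0, update_at. destruct (Nat.eqb_spec i N); auto. apply Hal. lia. }
    assert (Hupd : al = update_at al0 N (al N)).
    { extensionality i. unfold al0, update_at. destruct (Nat.eqb_spec i N); subst; auto. }
    rewrite Hupd.
    destruct (al N);
      [exact (IH _ _ (fun al => HF _) (fun al => HG _) Etrue al0 Hal0)
      |exact (IH _ _ (fun al => HF _) (fun al => HG _) Efalse al0 Hal0)].
Qed.

Lemma pattern_pigeonhole K N (F : nat -> (nat -> bool) -> nat) :
  (forall j al, F j al < K) ->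
  (forall j al al', (forall i, i < N -> al i = al' i) -> F j al = F j al') ->
  exists j j', j < j' <= K ^ 2 ^ N /\ forall al, F j al = F j' al.
Proof.
  intros HK Hloc.
  destruct (nat_pigeonhole (K ^ 2 ^ N) (fun j => pattern_code K N (F j)))
    as [j [j' [Hjj' E]]].
  { intros j _. apply pattern_code_lt, HK. }
  exists j, j'. split; [exact Hjj'|]. intros al.
  set (tr := fun i => (i <? N) && al i).
  assert (Htr : forall i, i < N -> al i = tr i).
  { intros i Hi. unfold tr. now replace (i <? N) with true by (symmetry; apply Nat.ltb_lt; lia). }
  rewrite (Hloc j al tr Htr), (Hloc j' al tr Htr).
  apply (pattern_code_inj K N); auto.
  intros i Hi. unfold tr. now replace (i <? N) with false by (symmetry; apply Nat.ltb_ge; lia).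
Qed.

Lemma ip_sum_with_block_in (P : nat -> Prop) p N B :
  (forall al, (exists i, i < N + B /\ al i = true) -> P (ip_sum p al (N + B))) ->
  forall al a b, a <= b <= B -> (exists i, i < N /\ al i = true) \/ a < b ->
  P (ip_sum p al N + sumn (fun i => p (N + (a + i))) (b - a)).
Proof.
  intros HP al a b Hab Hne.
  rewrite <- (ip_sum_interval (fun i => p (N + i)) a b B Hab), <- ip_sum_cat.
  apply HP. destruct Hne as [[i [Hi Hal]]|Hlt].
  - exists i. split; [lia|]. now replace (i <? N) with true by (symmetry; apply Nat.ltb_lt; lia).
  - exists (N + a). split; [lia|].
    replace (N + a <? N) with false by (symmetry; apply Nat.ltb_ge; lia).
    replace (N + a - N) with a by lia.
    rewrite Nat.leb_refl. now apply Nat.ltb_lt.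
Qed.

(* Among the prefixes of the last [K ^ 2 ^ N] generators, two ([u] and [u + v]) colour
   the translates of the IP-set of the first [N] generators identically. *)
Lemma ip_repeated_block (P : nat -> Prop) (c : nat -> nat) K N (p : nat -> nat) :
  (forall n, c n < K) -> (forall i, i < N + K ^ 2 ^ N -> 1 <= p i) ->
  (forall al, (exists i, i < N + K ^ 2 ^ N /\ al i = true) -> P (ip_sum p al (N + K ^ 2 ^ N))) ->
  exists u v, 1 <= v /\ P v /\ contains_finite_IP (fun n => P n /\ P (n + u) /\ P (n + v) /\
    P (n + (u + v)) /\ c (n + u) = c (n + (u + v))) N.
Proof.
  intros Hc Hp HP.
  set (blk a b := sumn (fun i => p (N + (a + i))) (b - a)).
  assert (Hblk : forall al a b, a <= b <= K ^ 2 ^ N ->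
    (exists i, i < N /\ al i = true) \/ a < b -> P (ip_sum p al N + blk a b))
    by exact (ip_sum_with_block_in P p N (K ^ 2 ^ N) HP).
  destruct (pattern_pigeonhole K N (fun j al => c (ip_sum p al N + blk 0 j)))
    as [j [j' [Hjj' Hpat]]];
    [intros; apply Hc|intros j al al' E; now rewrite (ip_sum_ext p al al' N E)|].
  assert (Huv : blk 0 j' = blk 0 j + blk j j').
  { unfold blk. replace (j' - 0) with (j + (j' - j)) by lia. now rewrite sumn_split, Nat.sub_0_r. }
  exists (blk 0 j), (blk j j'). split; [|split].
  - unfold blk. etransitivity; [|apply (sumn_ge_term _ _ 0); lia]. apply Hp. lia.
  - pose proof (Hblk (fun _ => false) j j' ltac:(lia) (or_intror (proj1 Hjj'))) as Hv.
    now rewrite ip_sum_empty in Hv.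
  - exists p. split; [intros i Hi; apply Hp; lia|]. intros al Hal. fold (ip_sum p al N).
    pose proof (Hblk al 0 0 ltac:(lia) (or_introl Hal)) as H00.
    unfold blk in H00; simpl in H00; rewrite Nat.add_0_r in H00.
    rewrite <- Huv. repeat split; [exact H00|apply (Hblk al 0 j)|apply (Hblk al j j')
      |apply (Hblk al 0 j')|apply Hpat]; auto; lia.
Qed.

Lemma ip_hilbert_cube m K : exists L, forall (P : nat -> Prop) (c : nat -> nat),
  (forall n, c n < K) -> contains_finite_IP P L ->
  exists f, 1 <= f /\ P f /\
    contains_finite_IP (fun n => P n /\ P (f + n) /\ c (f + n) = c f) m.
Proof.
  induction m as [|m [N HN]].
  - exists 1. intros P c _ [p [Hp HP]]. exists (p 0). split; [apply Hp; lia|].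
    split; [|apply contains_finite_IP_0].
    exact (HP (fun _ => true) ltac:(exists 0; split; [lia|reflexivity])).
  - exists (N + K ^ 2 ^ N). intros P c Hc [p [Hp HP]].
    destruct (ip_repeated_block P c K N p Hc Hp HP) as [u [v [Hv [HPv HP2]]]].
    destruct (HN _ (fun n => c (n + u)) (fun n => Hc _) HP2)
      as [f [Hf [(_ & HPfu & _ & HPfuv & Cf) HIPf]]].
    exists (f + u). split; [lia|]. split; [exact HPfu|].
    apply contains_finite_IP_snoc with (g := v); [exact Hv| |].
    + replace (f + u + v) with (f + (u + v)) by lia. auto.
    + revert HIPf. apply contains_finite_IP_mono.
      intros n [[Pn [_ [Pnv _]]] [[_ [Pfnu [_ [Pfnuv Cfn]]]] Cn]].
      replace (f + u + n) with (f + n + u) by lia.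
      replace (f + u + (v + n)) with (f + n + (u + v)) by lia.
      rewrite Nat.add_comm in Pnv. rewrite <- Cfn. repeat split; auto.
Qed.

(* Each application of the Hilbert cube lemma adds one generator to the IP-set of the
   colour of its base point; [v k] is the length demanded for colour [k]. *)
Lemma ip_folkman_weighted K n : exists L, forall v : nat -> nat, sumn v K <= n ->
  forall (P : nat -> Prop) (c : nat -> nat), (forall m, c m < K) -> contains_finite_IP P L ->
  exists k, k < K /\ contains_finite_IP (fun m => P m /\ c m = k) (v k).
Proof.
  induction n as [|n [Ln HLn]].
  - exists 0. intros v Hv P c Hc _. exists (c 0). split; [apply Hc|].
    pose proof (sumn_ge_term v K (c 0) (Hc 0)). replace (v (c 0)) with 0 by lia.
    apply contains_finite_IP_0.
  - destruct (ip_hilbert_cube Ln K) as [L HL]. exists L.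
    intros v Hv P c Hc HP. destruct (HL P c Hc HP) as [f [Hf [HPf HIPf]]].
    set (k0 := c f).
    destruct (Nat.eq_dec (v k0) 0) as [Hv0|Hv0].
    { exists k0. split; [apply Hc|]. rewrite Hv0. apply contains_finite_IP_0. }
    set (v' i := if i =? k0 then v i - 1 else v i).
    assert (Hdec : sumn v' K + 1 = sumn v K) by exact (sumn_decrement v K k0 (Hc f) ltac:(lia)).
    destruct (HLn v' ltac:(lia) _ c Hc HIPf) as [k [Hk HIPk]].
    exists k. split; [exact Hk|]. unfold v' in HIPk. destruct (Nat.eqb_spec k k0) as [->|Hne].
    + replace (v k0) with (S (v k0 - 1)) by lia.
      apply contains_finite_IP_snoc with (g := f); [exact Hf|split; auto|].
      revert HIPk. apply contains_finite_IP_mono.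
      intros m [[Pm [Pfm Cfm]] Cm]. unfold k0 in *. repeat split; auto.
    + revert HIPk. apply contains_finite_IP_mono. intros m [[Pm _] Cm]. auto.
Qed.

Theorem ip_folkman D K : exists L, forall (P : nat -> Prop) (c : nat -> nat),
  (forall m, c m < K) -> contains_finite_IP P L ->
  exists k, contains_finite_IP (fun m => P m /\ c m = k) D.
Proof.
  destruct (ip_folkman_weighted K (sumn (fun _ => D) K)) as [L HL]. exists L.
  intros P c Hc HP. destruct (HL (fun _ => D) (le_n _) P c Hc HP) as [k [_ Hk]]. eauto.
Qed.

End FiniteIPSets.

Section CompactMetric.
Context {X : Type} (d : X -> X -> R) (Hd : is_metric d).

Lemma metric_refl x : d x x = 0.
Proof. destruct Hd as [_ [Hzero _]]. now apply Hzero. Qed.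

Lemma metric_sym x y : d x y = d y x.
Proof. destruct Hd as [_ [_ [Hsym _]]]. apply Hsym. Qed.

Lemma metric_triangle_sym x y z : d x z <= d y x + d y z.
Proof. rewrite (metric_sym y x). destruct Hd as [_ [_ [_ Htri]]]. apply Htri. Qed.

Lemma open_ball c r : Defs.open_set d (fun w => d c w < r).
Proof.
  intros w Hw. exists (r - d c w). split; [lra|].
  intros y Hy. destruct Hd as [_ [_ [_ Htri]]]. pose proof (Htri c w y). lra.
Qed.

Lemma nbhd_ball c r : r > 0 -> nbhd d c (fun w => d c w < r).
Proof. intros Hr. exists (fun w => d c w < r). split; [apply open_ball|]. rewrite metric_refl. auto. Qed.

Hypothesis Hcpt : compact_space d.

Lemma compact_finite_coloring r : r > 0 ->
  exists (K : nat) (col : X -> nat), (forall w, (col w < K)%nat) /\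
    forall w w', col w = col w' -> d w w' < r.
Proof.
  intros Hr.
  destruct (Hcpt X (fun c w => d c w < r / 2)) as [l Hl];
    [intros c; apply open_ball|intros w; exists w; rewrite metric_refl; lra|].
  destruct (choice (fun w i => (i < length l)%nat /\ d (nth i l w) w < r / 2)) as [col Hcol].
  { intros w. destruct (Hl w) as [c [Hin Hcw]]. destruct (In_nth l c w Hin) as [i [Hi <-]]. eauto. }
  exists (length l), col. split; [apply Hcol|]. intros w w' E.
  destruct (Hcol w) as [Hi Hw], (Hcol w') as [_ Hw'].
  rewrite <- E, (nth_indep l w' w Hi) in Hw'.
  pose proof (metric_triangle_sym w (nth (col w) l w) w'). lra.
Qed.

Lemma compact_cluster_point (ys : nat -> X) :
  exists z, forall e, e > 0 -> forall M, exists m, (M <= m)%nat /\ d (ys m) z < e.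
Proof.
  apply NNPP. intros Hnone.
  assert (Hfar : forall z, exists e, e > 0 /\ exists M, forall m, (M <= m)%nat -> e <= d (ys m) z).
  { intros z. apply NNPP. intros Hz. apply Hnone. exists z. intros e He M.
    apply NNPP. intros Hm. apply Hz. exists e. split; [exact He|]. exists M. intros m HMm.
    apply Rnot_lt_le. intros Hlt. apply Hm. eauto. }
  (* The index carries its witnesses: the set is empty unless [e] and [M] show that
     [ys] eventually avoids the ball of radius [e] about [z]. *)
  destruct (Hcpt ((X * R) * nat)%type
     (fun '((z, e), M) w => e > 0 /\ (forall m, (M <= m)%nat -> e <= d (ys m) z) /\ d z w < e))
    as [l Hl].
  - intros [[z e] M] w (He & HM & Hw). destruct (open_ball z e w Hw) as [r [Hr Hball]].
    exists r. split; [exact Hr|]. intros y Hy. auto.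
  - intros w. destruct (Hfar w) as [e [He [M HM]]]. exists ((w, e), M). rewrite metric_refl. auto.
  - set (Mx := list_max (map snd l)).
    destruct (Hl (ys Mx)) as [[[z e] M] [Hin (_ & HM & Hz)]].
    assert (HMx : (M <= Mx)%nat).
    { apply (proj1 (Forall_forall _ _) (proj1 (list_max_le _ _) (le_n Mx))).
      exact (in_map snd l ((z, e), M) Hin). }
    specialize (HM Mx HMx). rewrite metric_sym in Hz. lra.
Qed.

End CompactMetric.

Lemma zpow_of_nat {X} (T Tinv : X -> X) n w : zpow T Tinv (Z.of_nat n) w = Nat.iter n T w.
Proof. destruct n as [|n]; [reflexivity|]. simpl. now rewrite SuccNat2Pos.id_succ. Qed.

Lemma dot_eps_of_nat D (q : nat -> nat) eps :
  dot_eps D (fun i => Z.of_nat (q i)) eps = Z.of_nat (ip_sum q eps D).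
Proof.
  unfold dot_eps, ip_sum. rewrite (sum_below_morph Nat.add 0%nat Z.add 0%Z); [|reflexivity|apply Nat2Z.inj_add].
  apply sum_below_ext. intros i _. now destruct (eps i).
Qed.

Lemma dot_eps_restrict D D' n eps : (D <= D')%nat ->
  dot_eps D' n (fun i => (Nat.ltb i D && eps i)%bool) = dot_eps D n eps.
Proof.
  intros Hle. unfold dot_eps. rewrite (sum_below_extend _ _ _ D D'); [|apply Z.add_0_r|exact Hle|].
  - apply sum_below_ext. intros i Hi. now replace (Nat.ltb i D) with true by (symmetry; apply Nat.ltb_lt; lia).
  - intros i Hi. now replace (Nat.ltb i D) with false by (symmetry; apply Nat.ltb_ge; lia).
Qed.

Section RegionalProximality.
Context {X : Type} (d : X -> X -> R) (Hd : is_metric d) (T Tinv : X -> X).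

(* [RP d T Tinv D a b] unfolds to [forall eta, eta > 0 -> RP_approx D eta a b]. *)
Definition RP_approx (D : nat) (eta : R) (a b : X) : Prop :=
  exists a' b' (n : nat -> Z), d a a' < eta /\ d b b' < eta /\
    forall eps : nat -> bool, (exists i, (i < D)%nat /\ eps i = true) ->
      d (zpow T Tinv (dot_eps D n eps) a') (zpow T Tinv (dot_eps D n eps) b') < eta.

Lemma RP_approx_le_dim D D' eta a b : (D <= D')%nat -> RP_approx D' eta a b -> RP_approx D eta a b.
Proof.
  intros Hle [a' [b' [n (Ha & Hb & Hn)]]]. exists a', b', n. split; [exact Ha|]. split; [exact Hb|].
  intros eps [i [Hi Hepsi]]. rewrite <- (dot_eps_restrict D D' n eps Hle). apply Hn.
  exists i. split; [lia|]. apply andb_true_intro. split; [now apply Nat.ltb_lt|exact Hepsi].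
Qed.

Lemma RP_approx_weaken D eta eta' a a0 b : d a0 a + eta <= eta' ->
  RP_approx D eta a b -> RP_approx D eta' a0 b.
Proof.
  intros Hle [a' [b' [n (Ha & Hb & Hn)]]]. destruct Hd as [Hpos [_ [_ Htri]]].
  pose proof (Hpos a0 a). pose proof (Htri a0 a a').
  exists a', b', n. split; [lra|]. split; [lra|]. intros eps Heps. specialize (Hn eps Heps). lra.
Qed.

End RegionalProximality.

Section Sensitivity.
Context {X : Type} (d : X -> X -> R) (Hd : is_metric d) (Hcpt : compact_space d)
  (T Tinv : X -> X) (r : R) (Hsens : block_Fip_sensitive d T r).

Lemma sensitive_IP_shift x D eta : eta > 0 ->
  exists y q (p : nat -> nat), d x y < eta /\ r < d (Nat.iter q T x) (Nat.iter q T y) /\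
    forall eps, (exists i, (i < D)%nat /\ eps i = true) -> forall w, w = x \/ w = y ->
      d (Nat.iter (ip_sum p eps D) T (Nat.iter q T w)) (Nat.iter (ip_sum p eps D) T w) < eta.
Proof.
  intros Heta.
  destruct (compact_finite_coloring d Hd Hcpt eta Heta) as [K [col [Hcol Hsmall]]].
  destruct (ip_folkman (S D) (K * K)) as [L HL].
  destruct (Hsens x _ (nbhd_ball d Hd x eta Heta) L) as [y [Hy HIP]].
  set (code n := (K * col (Nat.iter n T x) + col (Nat.iter n T y))%nat).
  assert (Hcode : forall n, (code n < K * K)%nat).
  { intros n. unfold code. pose proof (Hcol (Nat.iter n T x)). pose proof (Hcol (Nat.iter n T y)). nia. }
  destruct (HL _ code Hcode HIP) as [k [p [_ Hp]]].
  assert (Hsel : forall al, (exists i, (i < S D)%nat /\ al i = true) ->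
    r < d (Nat.iter (ip_sum p al (S D)) T x) (Nat.iter (ip_sum p al (S D)) T y) /\
    code (ip_sum p al (S D)) = k) by exact Hp.
  assert (Hbelow : forall j, (j < D)%nat -> Nat.ltb j D = true) by (intros; now apply Nat.ltb_lt).
  exists y, (p D), p. split; [exact Hy|]. split.
  - destruct (Hsel (fun i => Nat.eqb i D)) as [Hfar _]; [exists D; split; [lia|apply Nat.eqb_refl]|].
    rewrite ip_sum_last, ip_sum_empty, Nat.eqb_refl in Hfar; [exact Hfar|].
    intros i Hi. apply Nat.eqb_neq. lia.
  - intros eps [i [Hi Hepsi]] w Hw.
    destruct (Hsel (fun i => if Nat.ltb i D then eps i else true)) as [_ Hk1];
      [exists D; split; [lia|now rewrite Nat.ltb_irrefl]|].
    destruct (Hsel (fun i => (Nat.ltb i D && eps i)%bool)) as [_ Hk2].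
    { exists i. split; [lia|]. apply andb_true_intro. split; [now apply Nat.ltb_lt|exact Hepsi]. }
    rewrite ip_sum_last, Nat.ltb_irrefl, (ip_sum_ext p _ eps) in Hk1
      by (intros j Hj; now rewrite Hbelow).
    rewrite ip_sum_last, Nat.ltb_irrefl, Nat.add_0_r, (ip_sum_ext p _ eps) in Hk2
      by (intros j Hj; now rewrite Hbelow).
    rewrite <- Hk2 in Hk1.
    apply Nat.div_mod_unique in Hk1; [|apply Hcol..].
    rewrite <- Nat.iter_add.
    destruct Hk1 as [Ex Ey], Hw as [->| ->]; apply Hsmall; lia.
Qed.

Lemma sensitive_RP_approx x D eta : eta > 0 ->
  exists c, r / 2 < d x c /\ RP_approx d T Tinv D eta c x.
Proof.
  intros Heta. destruct (sensitive_IP_shift x D eta Heta) as [y [q [p (Hy & Hfar & Hshift)]]].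
  assert (Hwitness : forall w, w = x \/ w = y -> d x w < eta ->
    RP_approx d T Tinv D eta (Nat.iter q T w) x).
  { intros w Hw Hxw. exists (Nat.iter q T w), w, (fun i => Z.of_nat (p i)).
    rewrite metric_refl by exact Hd. split; [exact Heta|]. split; [exact Hxw|].
    intros eps Heps. rewrite dot_eps_of_nat, !zpow_of_nat. now apply Hshift. }
  pose proof (metric_triangle_sym d Hd (Nat.iter q T x) x (Nat.iter q T y)).
  destruct (Rlt_or_le (r / 2) (d x (Nat.iter q T x))) as [Hx|Hx].
  - exists (Nat.iter q T x). split; [exact Hx|]. apply Hwitness; [now left|].
    rewrite metric_refl by exact Hd. exact Heta.
  - exists (Nat.iter q T y). split; [lra|]. apply Hwitness; [now right|exact Hy].
Qed.

End Sensitivity.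

Theorem proposition4p11 (X : Type) (d : X -> X -> R) (T Tinv : X -> X) (delta : R) :
  is_metric d -> compact_space d ->
  continuous_map d T -> continuous_map d Tinv ->
  (forall x, T (Tinv x) = x) -> (forall x, Tinv (T x) = x) ->
  minimal d T ->
  delta > 0 ->
  block_Fip_sensitive d T (10 * delta) ->
  forall (x : X) (U : X -> Prop), nbhd d x U ->
  exists z y, U z /\ RP_inf d T Tinv y z /\ d z y >= delta.
Proof.
  intros Hd Hcpt _ _ _ _ _ Hdelta Hsens x U [V [_ [Vx HVU]]].
  destruct (choice (fun m c => 5 * delta < d x c /\ RP_approx d T Tinv m (/ INR (S m)) c x))
    as [ys Hys].
  { intros m. replace (5 * delta) with (10 * delta / 2) by field.
    apply (sensitive_RP_approx d Hd Hcpt T Tinv _ Hsens).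
    apply Rinv_0_lt_compat, lt_0_INR. lia. }
  destruct (compact_cluster_point d Hd Hcpt ys) as [z Hz].
  exists x, z. split; [|split].
  - auto.
  - intros D _ eta Heta.
    destruct (archimed_cor1 (eta / 2)) as [N [HN HN0]]; [lra|].
    destruct (Hz (eta / 2) ltac:(lra) (max D N)) as [m [Hm Hzm]].
    destruct (Hys m) as [_ Hm_approx].
    apply (RP_approx_le_dim d T Tinv D m); [lia|].
    apply (RP_approx_weaken d Hd T Tinv m (/ INR (S m)) eta (ys m)); [|exact Hm_approx].
    assert (/ INR (S m) <= / INR N).
    { apply Rinv_le_contravar; [apply lt_0_INR; lia|apply le_INR; lia]. }
    rewrite (metric_sym d Hd z). lra.
  - destruct (Hz delta Hdelta 0%nat) as [m [_ Hzm]]. destruct (Hys m) as [Hfar _].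
    pose proof (metric_triangle_sym d Hd x z (ys m)).
    pose proof (metric_sym d Hd z x). pose proof (metric_sym d Hd z (ys m)). lra.
Qed.
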